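(* Let $\mathfrak{g} = \mathfrak{X}(S^1)\ltimes Lb$ and let $\widehat{\mathfrak{g}} = \mathfrak{g}\oplus\mathbb{R}$ be its central extension by the 2-cocycle $c = \lambda_1 c_1 + \lambda_2 c_2 + \lambda_3 c_3$ (notation as in the context), where $\lambda_1,\lambda_2,\lambda_3\in\mathbb{R}$ satisfy $\frac{\lambda_1}{4} + \lambda_2 - 2\lambda_3 = 0$. Fix $a\in\mathbb{R}$ and define the linear functional $(\eta,a)\in\widehat{\mathfrak{g}}^*$ by $$\left\langle(\eta, a),\left(g\partial, \begin{pmatrix} x & y\\ 0 & -x\end{pmatrix}, t\right)\right\rangle = \int_{S^1} y\, d\theta + a t .$$ Let $\mathfrak{g}_{(\eta,a)} = \{X\in\mathfrak{g} : \langle(\eta,a),[(Y,0),(X,0)]_{\widehat{\mathfrak{g}}}\rangle = 0 \text{ for all } Y\in\mathfrak{g}\}$ be the stabiliser of $(\eta,a)$ under the coadjoint action, and let $\mathfrak{h} = Lb$, viewed as the ideal $\{(0,b): b\in Lb\}$ of $\mathfrak{g}$. Then $\mathfrak{g} = \mathfrak{g}_{(\eta,a)}\oplus\mathfrak{h}$ as vector spaces, i.e. $\mathfrak{g}_{(\eta,a)}\cap\mathfrak{h} = \{0\}$ and $\mathfrak{g}_{(\eta,a)}+\mathfrak{h} = \mathfrak{g}$.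
   Context: All functions are smooth and $2\pi$-periodic in $\theta$; $'$ denotes $d/d\theta$. $\mathfrak{X}(S^1) = \{f\partial : f\in C^\infty(S^1)\}$ with bracket $[f\partial, g\partial] = (fg' - f'g)\partial$. $Lb$ is the Lie algebra of smooth maps $S^1\to\left\{\begin{pmatrix} x & y\\ 0 & -x\end{pmatrix} : x,y\in\mathbb{R}\right\}$ with pointwise matrix commutator. The Lie algebra $\mathfrak{g} = \mathfrak{X}(S^1)\ltimes Lb$ and its central extension $\widehat{\mathfrak{g}} = \mathfrak{X}(S^1)\ltimes Lb\oplus\mathbb{R}$ have bracket $$[(f\partial, b, \delta_1), (g\partial, d, \delta_2)] = \big([f\partial, g\partial],\ [d, b] + f d' - g b',\ c((f\partial, b), (g\partial, d))\big),$$ where for $b_i = \begin{pmatrix} x_i & y_i\\ 0 & -x_i\end{pmatrix}$ the cocycles are $c_1((f_1\partial,b_1),(f_2\partial,b_2)) = \int_{S^1} x_1 x_2'\,d\theta$, $c_2((f_1\partial,b_1),(f_2\partial,b_2)) = \int_{S^1}(f_1'' x_2 - f_2'' x_1)\,d\theta$, $c_3((f_1\partial,b_1),(f_2\partial,b_2)) = \int_{S^1}(f_1'' f_2' - f_1' f_2'')\,d\theta$. *)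

From Stdlib Require Import Reals.
From Coquelicot Require Import Coquelicot.
Open Scope R_scope.

(** Smooth 2*PI-periodic real functions (functions on S^1 in the angle theta). *)
Definition smooth_per (f : R -> R) : Prop :=
  (forall (n : nat) (t : R), ex_derive_n f n t) /\
  (forall t : R, f (t + 2 * PI) = f t).

Definition intS1 (f : R -> R) : R := RInt f 0 (2 * PI).

(** Elements of g = X(S^1) |x Lb : a vector field f d/dtheta and a map
    b = [[x, y], [0, -x]] from S^1 to the Borel subalgebra. *)
Record gel := mkG { vf : R -> R ; lx : R -> R ; ly : R -> R }.

Definition in_g (X : gel) : Prop :=
  smooth_per (vf X) /\ smooth_per (lx X) /\ smooth_per (ly X).

Definition gzero : gel := mkG (fun _ => 0) (fun _ => 0) (fun _ => 0).
Definition gadd (X Y : gel) : gel :=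
  mkG (fun t => vf X t + vf Y t) (fun t => lx X t + lx Y t)
      (fun t => ly X t + ly Y t).

Record M2 := mkM { m11 : R ; m12 : R ; m21 : R ; m22 : R }.
Definition mmul (A B : M2) : M2 :=
  mkM (m11 A * m11 B + m12 A * m21 B) (m11 A * m12 B + m12 A * m22 B)
      (m21 A * m11 B + m22 A * m21 B) (m21 A * m12 B + m22 A * m22 B).
Definition msub (A B : M2) : M2 :=
  mkM (m11 A - m11 B) (m12 A - m12 B) (m21 A - m21 B) (m22 A - m22 B).
Definition mcomm (A B : M2) : M2 := msub (mmul A B) (mmul B A).
Definition bmat (x y : R) : M2 := mkM x y 0 (- x).

(** Bracket of g:
    [(f d, b), (g d, d)] = ([f d, g d], [d, b] + f d' - g b'),
    with [f d, g d] = (f g' - f' g) d.  The Lb-component [d,b] lies in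
    the Borel subalgebra, so it is recorded by its (1,1) and (1,2) entries. *)
Definition gbracket (X Y : gel) : gel :=
  let f := vf X in let g := vf Y in
  mkG (fun t => f t * Derive g t - Derive f t * g t)
      (fun t => m11 (mcomm (bmat (lx Y t) (ly Y t)) (bmat (lx X t) (ly X t)))
                + f t * Derive (lx Y) t - g t * Derive (lx X) t)
      (fun t => m12 (mcomm (bmat (lx Y t) (ly Y t)) (bmat (lx X t) (ly X t)))
                + f t * Derive (ly Y) t - g t * Derive (ly X) t).

Definition c1 (X1 X2 : gel) : R :=
  intS1 (fun t => lx X1 t * Derive (lx X2) t).
Definition c2 (X1 X2 : gel) : R :=
  intS1 (fun t => Derive_n (vf X1) 2 t * lx X2 t - Derive_n (vf X2) 2 t * lx X1 t).
Definition c3 (X1 X2 : gel) : R :=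
  intS1 (fun t => Derive_n (vf X1) 2 t * Derive (vf X2) t
                  - Derive (vf X1) t * Derive_n (vf X2) 2 t).

Definition cocycle (l1 l2 l3 : R) (X1 X2 : gel) : R :=
  l1 * c1 X1 X2 + l2 * c2 X1 X2 + l3 * c3 X1 X2.

Definition hbracket (l1 l2 l3 : R) (U V : gel * R) : gel * R :=
  (gbracket (fst U) (fst V), cocycle l1 l2 l3 (fst U) (fst V)).

Definition eta_a (a : R) (U : gel * R) : R := intS1 (ly (fst U)) + a * snd U.

Definition in_stab (l1 l2 l3 a : R) (X : gel) : Prop :=
  in_g X /\
  forall Y : gel, in_g Y ->
    eta_a a (hbracket l1 l2 l3 (Y, 0) (X, 0)) = 0.

Definition in_h (X : gel) : Prop := in_g X /\ vf X = (fun _ => 0).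

From Pilot Require Import Defs.
From Stdlib Require Import Reals Lra ZArith FunctionalExtensionality.
From Coquelicot Require Import Coquelicot.
Open Scope R_scope.

(* Write X = (f, x, y), Y = (g, u, v).  Pairing (eta, a) with [Y, X] integrates
   2(x v - y u) + g y' - f v' plus a times the cocycle densities.

   If X = (0, x, y) lies in the stabiliser, testing against Y = (0, 0, x) gives
   2 int x^2 = 0 and then against Y = (0, y, 0) gives -2 int y^2 = 0, so X = 0.

   Conversely every f lifts to X_f = (f, -f'/2, k f'') in the stabiliser, where
   k = -a (l1/4 + l2/2) is chosen so that the terms in u cancel.  Using
   l1/4 + l2 = 2 l3, the remaining density is the derivative of the periodic
   function -f v + a (l3 - l2/2) g' f' + k g f'', so it integrates to zero.
   Hence Z = X_(vf Z) + (Z - X_(vf Z)) with the second summand in Lb. *)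

Definition periodic (f : R -> R) : Prop := forall t, f (t + 2 * PI) = f t.

Lemma periodic_IZR (f : R -> R) :
  periodic f -> forall (z : Z) (t : R), f (t + 2 * PI * IZR z) = f t.
Proof.
  intros Hf z. induction z as [| z IHz | z IHz] using Z.peano_ind; intros t.
  - rewrite Rmult_0_r, Rplus_0_r. reflexivity.
  - rewrite succ_IZR, <- (IHz t), <- (Hf (t + 2 * PI * IZR z)). f_equal. ring.
  - rewrite <- Z.sub_1_r, minus_IZR, <- (IHz t), <- Hf. f_equal. ring.
Qed.

Lemma periodic_representative (f : R -> R) :
  periodic f -> forall t, exists s, 0 <= s < 2 * PI /\ f s = f t.
Proof.
  intros Hf t. pose proof PI_RGT_0 as HPI.
  set (k := Int_part (t / (2 * PI))).
  destruct (base_Int_part (t / (2 * PI))) as [Hk1 Hk2]. fold k in Hk1, Hk2.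
  exists (t - 2 * PI * IZR k). split; [split|].
  - apply Rmult_le_compat_l with (r := 2 * PI) in Hk1; [|lra].
    replace (2 * PI * (t / (2 * PI))) with t in Hk1 by (field; lra). lra.
  - assert (Hk3 : t / (2 * PI) - 1 < IZR k) by lra.
    apply Rmult_lt_compat_l with (r := 2 * PI) in Hk3; [|lra].
    replace (2 * PI * (t / (2 * PI) - 1)) with (t - 2 * PI) in Hk3 by (field; lra). lra.
  - rewrite <- (periodic_IZR f Hf k). f_equal. ring.
Qed.

Lemma continuous_nonneg_RInt_eq_0 (g : R -> R) (a b t : R) :
  (forall x, continuous g x) -> (forall x, 0 <= g x) ->
  RInt g a b = 0 -> a <= t < b -> g t = 0.
Proof.
  intros Hc Hpos HI Ht.
  destruct (Rle_lt_or_eq_dec 0 (g t) (Hpos t)) as [Hgt | Heq]; [exfalso | auto].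
  assert (Hint : forall c d, ex_RInt g c d)
    by (intros c d; apply (ex_RInt_continuous (V := R_CompleteNormedModule)); auto).
  destruct (Hc t (fun y => 0 < y) (open_gt 0 (g t) Hgt)) as [eps Heps].
  set (d := t + Rmin (eps / 2) ((b - t) / 2)).
  assert (Hd : t < d < b /\ d <= t + eps / 2).
  { pose proof (cond_pos eps). pose proof (Rmin_l (eps / 2) ((b - t) / 2)).
    pose proof (Rmin_r (eps / 2) ((b - t) / 2)).
    unfold d. repeat split; try lra. apply Rmin_case; lra. }
  assert (Hmid : 0 < RInt g t d).
  { apply RInt_gt_0; [lra | | auto].
    intros x Hx. apply Heps. change (Rabs (x - t) < eps).
    pose proof (cond_pos eps). rewrite Rabs_right; lra. }
  assert (Hleft : 0 <= RInt g a t) by (apply RInt_ge_0; auto; lra).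
  assert (Hright : 0 <= RInt g d b) by (apply RInt_ge_0; auto; lra).
  pose proof (RInt_Chasles g a t b (Hint _ _) (Hint _ _)) as E1.
  pose proof (RInt_Chasles g t d b (Hint _ _) (Hint _ _)) as E2.
  change plus with Rplus in E1, E2. lra.
Qed.

Lemma periodic_sq_RInt_eq_0 (f : R -> R) :
  (forall t, continuous f t) -> periodic f ->
  RInt (fun t => f t * f t) 0 (2 * PI) = 0 -> f = fun _ => 0.
Proof.
  intros Hc Hf HI. apply functional_extensionality. intros t.
  destruct (periodic_representative f Hf t) as [s [Hs <-]].
  apply Rsqr_0_uniq, (continuous_nonneg_RInt_eq_0 (fun t => f t * f t) 0 (2 * PI)); auto.
  - intros x. apply (continuous_mult f f x); auto.
  - intros x. apply Rle_0_sqr.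
Qed.

Lemma smooth_per_periodic (f : R -> R) : smooth_per f -> periodic f.
Proof. intros [_ Hf]. exact Hf. Qed.

Lemma smooth_per_ex_derive (f : R -> R) (n : nat) (t : R) :
  smooth_per f -> ex_derive (Derive_n f n) t.
Proof. intros [Hf _]. exact (Hf (S n) t). Qed.

Lemma periodic_Derive (f : R -> R) : periodic f -> periodic (Derive f).
Proof.
  intros Hf t. change (Derive_n f 1 (t + 2 * PI) = Derive_n f 1 t).
  rewrite <- Derive_n_comp_trans. apply Derive_n_ext. exact Hf.
Qed.

Lemma smooth_per_Derive (f : R -> R) : smooth_per f -> smooth_per (Derive f).
Proof.
  intros Hf. split.
  - intros [|n] t; [exact I|].
    apply (ex_derive_ext (Derive_n f (S n))).
    + intros s. change (Derive f) with (Derive_n f 1).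
      rewrite Derive_n_comp. rewrite Nat.add_1_r. reflexivity.
    + apply smooth_per_ex_derive, Hf.
  - apply periodic_Derive, smooth_per_periodic, Hf.
Qed.

Lemma smooth_per_scal (c : R) (f : R -> R) :
  smooth_per f -> smooth_per (fun t => c * f t).
Proof.
  intros [Hd Hp]. split.
  - intros n t. apply ex_derive_n_scal_l, Hd.
  - intros t. rewrite Hp. reflexivity.
Qed.

Lemma smooth_per_const (c : R) : smooth_per (fun _ => c).
Proof. split; [intros n t; apply ex_derive_n_const | reflexivity]. Qed.

Lemma smooth_per_minus (f g : R -> R) :
  smooth_per f -> smooth_per g -> smooth_per (fun t => f t - g t).
Proof.
  intros [Fd Fp] [Gd Gp]. split.
  - intros n t. apply ex_derive_n_minus; apply filter_forall; auto.
  - intros t. rewrite Fp, Gp. reflexivity.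
Qed.

Lemma ex_RInt_of_ex_derive (h : R -> R) (a b : R) :
  (forall t, ex_derive h t) -> ex_RInt h a b.
Proof.
  intros Hh. apply (ex_RInt_continuous (V := R_CompleteNormedModule)).
  intros t _. exact (ex_derive_continuous h t (Hh t)).
Qed.

Ltac smooth_per_derivatives :=
  repeat split;
  match goal with
  | H : smooth_per ?f |- ex_derive _ _ =>
      first [ exact (smooth_per_ex_derive f 0 _ H) | exact (smooth_per_ex_derive f 1 _ H)
            | exact (smooth_per_ex_derive f 2 _ H) | exact (smooth_per_ex_derive f 3 _ H) ]
  end.

Ltac unfold_gbracket :=
  unfold gbracket, mcomm, msub, mmul, bmat; cbn [vf lx ly m11 m12 m21 m22].

Ltac integrate_smooth :=
  apply (RInt_correct (V := R_CompleteNormedModule)), ex_RInt_of_ex_derive; intros t;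
  unfold_gbracket; auto_derive; smooth_per_derivatives.

Definition pairing_density (l1 l2 l3 a : R) (Y X : gel) (t : R) : R :=
  ly (gbracket Y X) t
  + a * (l1 * (lx Y t * Derive (lx X) t)
         + l2 * (Derive_n (vf Y) 2 t * lx X t - Derive_n (vf X) 2 t * lx Y t)
         + l3 * (Derive_n (vf Y) 2 t * Derive (vf X) t
                 - Derive (vf Y) t * Derive_n (vf X) 2 t)).

Lemma eta_a_hbracket (l1 l2 l3 a : R) (X Y : gel) : in_g X -> in_g Y ->
  eta_a a (hbracket l1 l2 l3 (Y, 0) (X, 0)) = intS1 (pairing_density l1 l2 l3 a Y X).
Proof.
  intros [HX1 [HX2 HX3]] [HY1 [HY2 HY3]].
  unfold eta_a, hbracket, cocycle, Defs.c1, c2, c3, intS1, pairing_density; cbn [fst snd].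
  symmetry. apply is_RInt_unique.
  apply (is_RInt_plus (V := R_NormedModule));
    [integrate_smooth | apply (is_RInt_scal (V := R_NormedModule))].
  apply (is_RInt_plus (V := R_NormedModule)); [apply (is_RInt_plus (V := R_NormedModule)) |];
    apply (is_RInt_scal (V := R_NormedModule)); integrate_smooth.
Qed.

Lemma pairing_density_ex_derive (l1 l2 l3 a : R) (X Y : gel) (t : R) :
  in_g X -> in_g Y -> ex_derive (pairing_density l1 l2 l3 a Y X) t.
Proof.
  intros [HX1 [HX2 HX3]] [HY1 [HY2 HY3]].
  unfold pairing_density; unfold_gbracket; auto_derive; smooth_per_derivatives.
Qed.

Lemma pairing_density_Lb (l1 l2 l3 a : R) (u v x y : R -> R) (t : R) :
  pairing_density l1 l2 l3 a (mkG (fun _ => 0) u v) (mkG (fun _ => 0) x y) t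
  = 2 * (x t * v t - y t * u t) + a * l1 * (u t * Derive x t).
Proof.
  unfold pairing_density; unfold_gbracket. rewrite !Derive_n_const, !Derive_const. ring.
Qed.

Lemma intS1_ext (f g : R -> R) : (forall t, f t = g t) -> intS1 f = intS1 g.
Proof. intros Hfg. apply RInt_ext. intros t _. apply Hfg. Qed.

Lemma smooth_per_sq_intS1_eq_0 (c : R) (h : R -> R) :
  c <> 0 -> smooth_per h -> intS1 (fun t => c * (h t * h t)) = 0 -> h = fun _ => 0.
Proof.
  intros Hc Hh HI. apply periodic_sq_RInt_eq_0.
  - intros t. exact (ex_derive_continuous h t (smooth_per_ex_derive h 0 t Hh)).
  - apply smooth_per_periodic, Hh.
  - unfold intS1 in HI. rewrite (RInt_scal (V := R_CompleteNormedModule)) in HI.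
    + apply Rmult_integral in HI as [|]; [contradiction | assumption].
    + apply ex_RInt_of_ex_derive. intros t. auto_derive. smooth_per_derivatives.
Qed.

Lemma stab_cap_h_trivial (l1 l2 l3 a : R) (X : gel) :
  in_stab l1 l2 l3 a X -> in_h X -> X = gzero.
Proof.
  intros [HX Hstab] [_ Hvf]. destruct X as [f x y]; cbn in Hvf; subst f.
  pose proof HX as [_ [Hx Hy]]; cbn [lx ly] in Hx, Hy.
  assert (Htest : forall u v, smooth_per u -> smooth_per v ->
            intS1 (fun t => 2 * (x t * v t - y t * u t) + a * l1 * (u t * Derive x t)) = 0).
  { intros u v Hu Hv.
    assert (HY : in_g (mkG (fun _ => 0) u v)) by (split; [|split]; cbn; auto using smooth_per_const).
    rewrite <- (Hstab _ HY), eta_a_hbracket by assumption.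
    apply intS1_ext. intros t. symmetry. apply pairing_density_Lb. }
  assert (Hx0 : x = fun _ => 0).
  { apply (smooth_per_sq_intS1_eq_0 2); [lra | exact Hx |].
    rewrite <- (Htest (fun _ => 0) x); auto using smooth_per_const.
    apply intS1_ext. intros t. ring. }
  subst x.
  assert (Hy0 : y = fun _ => 0).
  { apply (smooth_per_sq_intS1_eq_0 (-2)); [lra | exact Hy |].
    rewrite <- (Htest y (fun _ => 0)); auto using smooth_per_const.
    apply intS1_ext. intros t. rewrite Derive_const. ring. }
  subst y. reflexivity.
Qed.

Ltac eta_reduce_Derive :=
  repeat match goal with
         | |- context [Derive (fun x => ?h x)] => change (Derive (fun x => h x)) with (Derive h)
         end.

Section StabiliserLift.

Variables l1 l2 l3 a : R.
Hypothesis hl : l1 / 4 + l2 - 2 * l3 = 0.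

Definition stab_lift (f : R -> R) : gel :=
  mkG f (fun t => -1/2 * Derive f t) (fun t => - a * (l1 / 4 + l2 / 2) * Derive (Derive f) t).

Definition stab_potential (f : R -> R) (Y : gel) (t : R) : R :=
  - (f t * ly Y t) + a * (l3 - l2 / 2) * (Derive (vf Y) t * Derive f t)
  - a * (l1 / 4 + l2 / 2) * (vf Y t * Derive (Derive f) t).

Lemma stab_lift_in_g (f : R -> R) : smooth_per f -> in_g (stab_lift f).
Proof.
  intros Hf. split; [|split]; cbn [vf lx ly]; [exact Hf | |];
    apply smooth_per_scal; auto using smooth_per_Derive.
Qed.

Lemma stab_potential_derive (f : R -> R) (Y : gel) (t : R) :
  smooth_per f -> in_g Y ->
  is_derive (stab_potential f Y) t (pairing_density l1 l2 l3 a Y (stab_lift f) t).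
Proof.
  intros Hf [Hg [Hu Hv]]. unfold stab_potential, pairing_density, stab_lift. unfold_gbracket.
  rewrite !Derive_scal. cbn [Derive_n].
  auto_derive; [smooth_per_derivatives |].
  eta_reduce_Derive. replace l1 with (8 * l3 - 4 * l2) by lra. field.
Qed.

Lemma stab_potential_periodic (f : R -> R) (Y : gel) :
  smooth_per f -> in_g Y -> periodic (stab_potential f Y).
Proof.
  intros Hf [Hg [_ Hv]] t.
  apply smooth_per_periodic in Hf, Hg, Hv.
  unfold stab_potential.
  rewrite Hf, Hv, Hg, !periodic_Derive; auto using periodic_Derive.
Qed.

Lemma stab_lift_in_stab (f : R -> R) : smooth_per f -> in_stab l1 l2 l3 a (stab_lift f).
Proof.
  intros Hf. split; [exact (stab_lift_in_g f Hf) |].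
  intros Y HY. rewrite eta_a_hbracket by auto using stab_lift_in_g.
  assert (Hftc : is_RInt (pairing_density l1 l2 l3 a Y (stab_lift f)) 0 (2 * PI)
            (minus (stab_potential f Y (0 + 2 * PI)) (stab_potential f Y 0))).
  { rewrite Rplus_0_l. apply (is_RInt_derive (V := R_CompleteNormedModule)); intros t _.
    - apply stab_potential_derive; assumption.
    - apply (ex_derive_continuous (V := R_NormedModule)), pairing_density_ex_derive;
        auto using stab_lift_in_g. }
  rewrite stab_potential_periodic, minus_eq_zero in Hftc by assumption.
  exact (is_RInt_unique _ _ _ _ Hftc).
Qed.

End StabiliserLift.

Definition gsub (X Y : gel) : gel :=
  mkG (fun t => vf X t - vf Y t) (fun t => lx X t - lx Y t) (fun t => ly X t - ly Y t).

Lemma gadd_gsub (X Y : gel) : gadd Y (gsub X Y) = X.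
Proof.
  destruct X as [f x y]. unfold gadd, gsub; cbn [vf lx ly].
  f_equal; apply functional_extensionality; intros t; ring.
Qed.

Lemma in_h_gsub (X Y : gel) : in_g X -> in_g Y -> vf X = vf Y -> in_h (gsub X Y).
Proof.
  intros [HX1 [HX2 HX3]] [HY1 [HY2 HY3]] Hvf. split.
  - split; [|split]; apply smooth_per_minus; assumption.
  - cbn [gsub vf]. rewrite Hvf. apply functional_extensionality. intros t. ring.
Qed.

Theorem mainTheorem1 (l1 l2 l3 a : R)
  (hl : l1 / 4 + l2 - 2 * l3 = 0) :
  (forall X : gel, in_stab l1 l2 l3 a X -> in_h X -> X = gzero) /\
  (forall Z : gel, in_g Z ->
     exists X H : gel, in_stab l1 l2 l3 a X /\ in_h H /\ Z = gadd X H).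
Proof.
  split.
  - exact (stab_cap_h_trivial l1 l2 l3 a).
  - intros Z HZ. pose proof HZ as [Hf _].
    set (X := stab_lift l1 l2 a (vf Z)).
    exists X, (gsub Z X). split; [|split].
    + exact (stab_lift_in_stab l1 l2 l3 a hl (vf Z) Hf).
    + apply in_h_gsub; [exact HZ | exact (stab_lift_in_g l1 l2 a (vf Z) Hf) | reflexivity].
    + symmetry. apply gadd_gsub.
Qed.
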